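(* For all $\alpha,\beta\ge1$ and $d\in\mathbb{Z}\setminus\{0\}$, $\widetilde{\epsilon'_d}(\mathcal{R}_{\alpha,\beta})\subset\mathcal{Q}_{\alpha,\beta}$.
   Context: Let $k$ be a field of characteristic zero, $n\ge3$, $k[t,\mathbf{x}]=k[t,x_1,\ldots,x_n]$. Let $\widetilde{D'}=\sum_{j=2}^{n}(j-1)\,x_{j-1}\,\partial/\partial x_j$ as a derivation of $k[t,\mathbf{x}]$ killing $t$, and for $d\in k$, $\widetilde{\epsilon'_d}=\exp(d\widetilde{D'})$, $\exp E(g)=\sum_{i\ge0}E^i(g)/i!$. For nonzero $p=\sum u_{i_0,\ldots,i_n}t^{i_0}x_1^{i_1}\cdots x_n^{i_n}$, $\mathrm{supp}(p)$ is the set of exponent vectors with nonzero coefficient, $\deg_{\mathbf w}(p)=\max\{\sum_j i_jw_j:(i_0,\ldots,i_n)\in\mathrm{supp}(p)\}$, and $\mathrm{lt}(p)$ is the leading term for the lexicographic order with $t>x_1>\cdots>x_n$. Let $\mathbf{w}_3=(0,1,\ldots,1)$ (weight $0$ on $t$, $1$ on each $x_j$). For $\alpha,\beta\ge1$: $\mathcal{Q}_{\alpha,\beta}$ is the set of nonzero $p$ with $\deg_{\mathbf{w}_3}(p)\le\beta$ and $\mathrm{lt}(p)\in k^*t^\alpha x_1^\beta$; $\mathcal{R}_{\alpha,\beta}$ is the set of nonzero $p$ with $\deg_{\mathbf{w}_3}(p)\le\beta$ and $\mathrm{lt}(p)\in k^*t^\alpha x_n^\beta$. *)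

From HB Require Import structures.
From mathcomp Require Import all_boot all_order all_algebra.
From mathcomp Require Import mpoly.
Set Implicit Arguments. Unset Strict Implicit. Unset Printing Implicit Defensive.
Import Order.TTheory GRing.Theory Num.Theory.
Local Open Scope ring_scope.

(* Conventions: k[t, x_1, ..., x_n] is {mpoly k[n.+1]}; variable index 0 is t,
   variable index j (1 <= j <= n) is x_j. *)

Definition Dprime (k : fieldType) (n : nat) (p : {mpoly k[n.+1]}) : {mpoly k[n.+1]} :=
  \sum_(j < n.+1 | (2 <= j)%N)
     ((j.-1)%:R * 'X_(inord j.-1 : 'I_n.+1)) * p^`M(j).

(* exp(d D')(g) = sum_{i >= 0} d^i D'^i(g) / i!.  D' is locally nilpotent:
   D' lowers the weight sum_j j*m_j of every monomial by 1, so D'^i g = 0 for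
   i > n * (msize g); the sum is therefore truncated at that finite bound,
   which does not change its value. *)
Definition expDprime (k : fieldType) (n : nat) (d : k) (g : {mpoly k[n.+1]})
  : {mpoly k[n.+1]} :=
  \sum_(i < (n * msize g).+1) ((d ^+ i) / (i`!)%:R) *: iter i (@Dprime k n) g.

(* strict lexicographic order on exponent vectors, t > x_1 > ... > x_n *)
Definition lex_lt (N : nat) (m1 m2 : 'X_{1..N}) : Prop :=
  exists i : 'I_N, (forall j : 'I_N, (j < i)%N -> m1 j = m2 j) /\ (m1 i < m2 i)%N.

Definition lex_lead_is (k : fieldType) (N : nat) (p : {mpoly k[N]}) (mon : 'X_{1..N}) : Prop :=
  mon \in msupp p /\ (forall m, m \in msupp p -> m <> mon -> lex_lt m mon).

(* deg_{w3}(p) <= b, w3 = (0,1,...,1) : weight 0 on t (index 0), 1 on each x_j *)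
Definition degw3_le (k : fieldType) (n : nat) (p : {mpoly k[n.+1]}) (b : nat) : Prop :=
  forall m, m \in msupp p -> (\sum_(j < n.+1 | (1 <= j)%N) m j <= b)%N.

Definition mon_t_x (n : nat) (a b : nat) (j : 'I_n.+1) : 'X_{1..n.+1} :=
  [multinom (if i == ord0 then a else 0%N) + (if i == j then b else 0%N) | i < n.+1].

Definition Qset (k : fieldType) (n : nat) (a b : nat) (p : {mpoly k[n.+1]}) : Prop :=
  p != 0 /\ degw3_le p b /\ lex_lead_is p (@mon_t_x n a b (inord 1)).

Definition Rset (k : fieldType) (n : nat) (a b : nat) (p : {mpoly k[n.+1]}) : Prop :=
  p != 0 /\ degw3_le p b /\ lex_lead_is p (@mon_t_x n a b (inord n)).

From HB Require Import structures.
From mathcomp Require Import all_boot all_order all_algebra.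
From mathcomp Require Import mpoly.
From mathcomp Require Import zify.
Import Order.TTheory GRing.Theory Num.Theory.
Local Open Scope ring_scope.

(* D' = sum_{j>=2} (j-1) x_{j-1} d/dx_j acts on monomials by "moves"
   x_j |-> x_{j-1}, which preserve the t-degree and the total degree and lower
   the weight sum_j j m_j by one.  Hence, for p in R_{alpha,beta}:
   - the box {t-degree <= alpha, x-degree <= beta} containing supp p is
     preserved by D', so exp(d D') p stays in it; this gives the degree bound,
     and every other monomial of the box is lex-below t^alpha x_1^beta;
   - the non-leading monomials of p lie below the corner
     {t-degree <> alpha or x-degree < beta}, also preserved by D', so only the
     leading term t^alpha x_n^beta contributes to the coefficient of
     t^alpha x_1^beta in exp(d D') p;
   - by weights, only D'^((n-1) beta) contributes, and its coefficient is a
     positive integer: D' has nonnegative integer structure constants and a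
     chain of (n-1) beta moves leads from x_n^beta to x_1^beta. *)

Section Monomials.
Context {N : nat}.
Implicit Types (m u : 'X_{1..N}) (i j l : 'I_N).

Lemma addm_unit_sub {i m} : (0 < m i)%N -> (U_(i) + (m - U_(i)))%MM = m.
Proof.
move=> mi_gt0; apply/mnmP=> l; rewrite mnmDE mnmBE mnm1E.
by case: eqP => [<-|_]; [rewrite add1n subn1 prednK | rewrite subn0].
Qed.

Lemma addmCA m1 m2 m3 : (m1 + (m2 + m3) = m2 + (m1 + m3))%MM.
Proof. by rewrite addmA (addmC m1) -addmA. Qed.

Lemma mdeg_ge2 m i j : i != j -> (m i + m j <= mdeg m)%N.
Proof.
move=> ij; rewrite mdegE (bigD1 i) //= (bigD1 j) /=; last by rewrite eq_sym.
lia.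
Qed.

Lemma mdeg_ge3 m i j l :
  i != j -> l != i -> l != j -> (m i + m j + m l <= mdeg m)%N.
Proof.
move=> ij li lj; rewrite mdegE (bigD1 i) //= (bigD1 j) /=; last by rewrite eq_sym.
by rewrite (bigD1 l) /=; [lia | rewrite li lj].
Qed.

(* The weight sum_l l * m_l; D' lowers the weight of every monomial by one. *)
Definition weight m := (\sum_(l < N) l * m l)%N.

Lemma weightD m u : weight (m + u)%MM = (weight m + weight u)%N.
Proof. by rewrite /weight -big_split; apply: eq_bigr => l _; rewrite mnmDE mulnDr. Qed.

Lemma weightMn m b : weight (m *+ b)%MM = (weight m * b)%N.
Proof. by rewrite /weight big_distrl; apply: eq_bigr => l _; rewrite mulmnE mulnA. Qed.

Lemma weightU i : weight U_(i)%MM = i.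
Proof.
rewrite /weight (bigD1 i) //= mnm1E eqxx muln1 big1 ?addn0 // => l li.
by rewrite mnm1E eq_sym (negbTE li) muln0.
Qed.

End Monomials.

Section ExponentVectors.
Context {n : nat}.
Implicit Types (m u : 'X_{1..n.+1}) (j l : 'I_n.+1).

Lemma ord_neq j l : (j : nat) != l -> j != l.
Proof. by apply: contra => /eqP ->. Qed.

Lemma inord_pred j : (inord j.-1 : 'I_n.+1) = j.-1 :> nat.
Proof. by rewrite inordK // (leq_ltn_trans (leq_pred _) (ltn_ord j)). Qed.

Lemma inord_neq0 (i : nat) : (1 <= i <= n)%N -> (inord i : 'I_n.+1) != ord0.
Proof. by move=> /andP[i_gt0 i_le]; apply: ord_neq; rewrite /= inordK; lia. Qed.

Lemma mon_t_xE a b j : mon_t_x a b j = (U_(ord0) *+ a + U_(j) *+ b)%MM.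
Proof.
apply/mnmP => i; rewrite mnmE mnmDE !mulmnE !mnm1E [ord0 == i]eq_sym [j == i]eq_sym.
by case: (i == ord0); case: (i == j); rewrite ?mul1n ?mul0n.
Qed.

Lemma mon_t_x_at a b j l :
  mon_t_x a b j l = ((if l == ord0 then a else 0) + (if l == j then b else 0))%N.
Proof. by rewrite mnmE. Qed.

Lemma mon_t_x_at0 a b j : j != ord0 -> mon_t_x a b j ord0 = a.
Proof. by move=> j_neq0; rewrite mon_t_x_at eqxx eq_sym (negbTE j_neq0) addn0. Qed.

Lemma mdeg_mon_t_x a b j : mdeg (mon_t_x a b j) = (a + b)%N.
Proof. by rewrite mon_t_xE mdegD !mdegMn !mdeg1 !mul1n. Qed.

(* The w3-degree of a monomial: its degree in x_1, ..., x_n. *)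
Definition xdeg m := (mdeg m - m ord0)%N.

Lemma xdegE m : (\sum_(j < n.+1 | (1 <= j)%N) m j)%N = xdeg m.
Proof.
rewrite /xdeg mdegE big_mkcond /= [in RHS]big_ord_recl big_ord_recl /= add0n addKn.
by apply: eq_bigr.
Qed.

Lemma xdeg_mon_t_x a b j : j != ord0 -> xdeg (mon_t_x a b j) = b.
Proof. by move=> j_neq0; rewrite /xdeg mdeg_mon_t_x mon_t_x_at0 // addKn. Qed.

(* A move U_(j) + u |-> U_(j-1) + u (j >= 2), the monomial-level effect of a
   summand of D', preserves the t-exponent and the total degree... *)
Lemma Dmove_invariant (f : nat -> nat -> bool) u j : (2 <= j)%N ->
  f ((U_(j) + u)%MM ord0) (mdeg (U_(j) + u)%MM) ->
  f ((U_(inord j.-1) + u)%MM ord0) (mdeg (U_(inord j.-1) + u)%MM).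
Proof.
move=> j_ge2; rewrite !mnmDE !mnm1E !mdegD !mdeg1.
have /negbTE-> : j != ord0 by apply: ord_neq => /=; lia.
have /negbTE-> // : (inord j.-1 : 'I_n.+1) != ord0.
by apply: ord_neq => /=; rewrite inord_pred; lia.
Qed.

Lemma weight_Dmove u j : (2 <= j)%N ->
  weight (U_(j) + u)%MM = (weight (U_(inord j.-1) + u)%MM).+1.
Proof. by move=> j_ge2; rewrite !weightD !weightU inord_pred; lia. Qed.

(* Dpath i m m': m' arises from m by i successive moves; these are the
   monomials that D'^i can reach from x^m. *)
Inductive Dpath : nat -> 'X_{1..n.+1} -> 'X_{1..n.+1} -> Prop :=
| Dpath0 m : Dpath 0 m m
| DpathS i m u j : Dpath i m (U_(j) + u)%MM -> (2 <= j)%N ->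
    Dpath i.+1 m (U_(inord j.-1) + u)%MM.

Lemma Dpath_trans a b m1 m2 m3 :
  Dpath a m1 m2 -> Dpath b m2 m3 -> Dpath (a + b) m1 m3.
Proof.
move=> p12 p23; elim: p23 p12 => [m|i m u j _ IH j_ge2] p12; first by rewrite addn0.
by rewrite addnS; apply: DpathS => //; apply: IH.
Qed.

Lemma Dpath_lower_one (j : nat) u : (1 <= j <= n)%N ->
  Dpath j.-1 (U_(inord j) + u)%MM (U_(inord 1) + u)%MM.
Proof.
elim: j => [//|j IH] /andP[_ j_lt]; case: j IH j_lt => [_ _|j IH j_lt]; first exact: Dpath0.
have step : Dpath 1 (U_(inord j.+2) + u)%MM (U_(inord j.+1) + u)%MM.
  have -> : (inord j.+1 : 'I_n.+1) = inord (@inord n j.+2).-1 by rewrite inordK.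
  by apply: DpathS; [exact: Dpath0 | rewrite inordK].
by rewrite -add1n; apply: Dpath_trans step (IH _); lia.
Qed.

Hypothesis n_gt0 : (1 <= n)%N.

Lemma inord_n_neq0 : (inord n : 'I_n.+1) != ord0.
Proof. by apply: inord_neq0; rewrite n_gt0 leqnn. Qed.

Lemma inord_1_neq0 : (inord 1 : 'I_n.+1) != ord0.
Proof. by apply: inord_neq0; rewrite n_gt0. Qed.

Lemma Dpath_lower (b : nat) w :
  Dpath (n.-1 * b) (U_(inord n) *+ b + w)%MM (U_(inord 1) *+ b + w)%MM.
Proof.
elim: b w => [|b IH] w; first by rewrite muln0; exact: Dpath0.
rewrite !mulmS -!addmA mulnS; apply: Dpath_trans.
  by apply: Dpath_lower_one; rewrite n_gt0 leqnn.
by rewrite !(addmCA U_(inord 1)%MM); exact: IH.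
Qed.

Lemma lex_below_Rlead a b m : lex_lt m (mon_t_x a b (inord n)) ->
  (m ord0 < a)%N \/ (m ord0 = a /\ (xdeg m < b)%N).
Proof.
move=> [i [agree lt_i]].
have n_neq0 := inord_n_neq0.
have n_val : (inord n : 'I_n.+1) = n :> nat by rewrite inordK.
have M_at l : mon_t_x a b (inord n) l =
    if l == ord0 then a else if l == inord n then b else 0%N.
  rewrite mon_t_x_at; case: eqP => [->|_]; last by rewrite add0n.
  by rewrite eq_sym (negbTE n_neq0) addn0.
move: lt_i; rewrite M_at; case: eqP => [-> |/eqP i_neq0]; first by left.
case: eqP => [i_n lt_b|]; last by rewrite ltn0.
have before_i l : (l < i)%N -> m l = mon_t_x a b (inord n) l by apply: agree.
have m0 : m ord0 = a.
  by rewrite before_i ?M_at ?eqxx // i_n n_val.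
have others l : l != ord0 -> l != inord n -> m l = 0%N.
  move=> l0 ln; rewrite before_i ?M_at ?(negbTE l0) ?(negbTE ln) // i_n n_val.
  have : (l : nat) != (inord n : 'I_n.+1) by apply: contra ln => /eqP/val_inj->.
  by rewrite n_val; have := ltn_ord l; lia.
right; split => //.
rewrite /xdeg mdegE (bigD1 ord0) //= (bigD1 (inord n)) /=; last by rewrite n_neq0.
rewrite big1 ?addn0 => [|l /andP[l0 ln]]; last exact: others.
by rewrite addKn -i_n.
Qed.

Lemma lex_below_Qlead a b m : (m ord0 <= a)%N -> (xdeg m <= b)%N ->
  m <> mon_t_x a b (inord 1) -> lex_lt m (mon_t_x a b (inord 1)).
Proof.
rewrite /xdeg => m0_le xdeg_le m_neq.
have one_neq0 := inord_1_neq0.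
have one_val : (inord 1 : 'I_n.+1) = 1%N :> nat by rewrite inordK.
have M_at l : mon_t_x a b (inord 1) l =
    if l == ord0 then a else if l == inord 1 then b else 0%N.
  rewrite mon_t_x_at; case: eqP => [->|_]; last by rewrite add0n.
  by rewrite eq_sym (negbTE one_neq0) addn0.
case: (ltnP (m ord0) a) => [m0_lt|a_le].
  by exists ord0; rewrite M_at eqxx.
have m0 : m ord0 = a by lia.
case: (ltnP (m (inord 1)) b) => [m1_lt|b_le].
  exists (inord 1); rewrite M_at (negbTE one_neq0) eqxx; split => // l.
  rewrite one_val ltnS leqn0 => /eqP l0.
  by rewrite (_ : l = ord0) ?M_at ?eqxx //; apply/val_inj.
exfalso; apply: m_neq; apply/mnmP => l; rewrite M_at.
have zero_neq1 : ord0 != inord 1 :> 'I_n.+1 by rewrite eq_sym.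
have := mdeg_ge2 m _ _ zero_neq1.
case: (l =P ord0) => [-> //|/eqP l0].
case: (l =P inord 1) => [->|/eqP l1]; first lia.
have := mdeg_ge3 m _ _ _ zero_neq1 l0 l1; lia.
Qed.

End ExponentVectors.

Lemma mcoeffMX_cases (R : ringType) (N : nat) (q : {mpoly R[N]}) (i : 'I_N) m :
  (q * 'X_i)@_m = if (0 < m i)%N then q@_(m - U_(i))%MM else 0.
Proof.
case: ifP => [mi_gt0|mi0]; first by rewrite -{1}(addm_unit_sub mi_gt0) mcoeffMX.
apply/eqP; rewrite mcoeff_eq0 (perm_mem (msuppMX _ _)); apply/mapP => -[m' _ e].
by move: mi0; rewrite e mnmDE mnm1E eqxx.
Qed.

Lemma natr_neq0 {k : fieldType} (chark0 : [pchar k] =i pred0) (c : nat) :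
  (c != 0)%N -> (c%:R : k) != 0.
Proof. by move=> c_neq0; rewrite (pcharf0P _).1. Qed.

Lemma intr_neq0 {k : fieldType} (chark0 : [pchar k] =i pred0) {d : int} :
  d != 0 -> (d%:~R : k) != 0.
Proof.
case: d => c d_neq0; last by rewrite NegzE mulrNz oppr_eq0 natr_neq0.
by rewrite -pmulrn natr_neq0 //; apply: contraNneq d_neq0 => ->.
Qed.

Section Derivation.
Context {k : fieldType} {n : nat}.
Implicit Types (q : {mpoly k[n.+1]}) (m u : 'X_{1..n.+1}) (P Q : pred 'X_{1..n.+1}).

Local Notation D := (@Dprime k n).

Lemma Dprime_coef q m : (D q)@_m = \sum_(j < n.+1 | (2 <= j)%N)
  (j.-1)%:R * (q^`M(j) * 'X_(inord j.-1 : 'I_n.+1))@_m.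
Proof.
rewrite /Dprime raddf_sum; apply: eq_bigr => j _.
by rewrite -mulrA mulr_natl raddfMn /= mulr_natl mulrC.
Qed.

Lemma Dprime_linear (a : k) q1 q2 : D (a *: q1 + q2) = a *: D q1 + D q2.
Proof.
rewrite /Dprime scaler_sumr -big_split; apply: eq_bigr => j _ /=.
by rewrite mderivD mderivZ mulrDr scalerAr.
Qed.

Lemma iter_Dprime_linear (a : k) q1 q2 i :
  iter i D (a *: q1 + q2) = a *: iter i D q1 + iter i D q2.
Proof. by elim: i => [|i IH] //=; rewrite IH Dprime_linear. Qed.

Lemma expDprime_coef (d : k) q m : (expDprime d q)@_m =
  \sum_(i < (n * msize q).+1) (d ^+ i / (i`!)%:R) * (iter i D q)@_m.
Proof. by rewrite /expDprime raddf_sum; apply: eq_bigr => i _; rewrite /= mcoeffZ. Qed.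

Definition supported_in P q := forall m, ~~ P m -> q@_m = 0.

Definition Dmove_closed P Q := forall u (j : 'I_n.+1),
  (2 <= j)%N -> P (U_(j) + u)%MM -> Q (U_(inord j.-1) + u)%MM.

Lemma Dprime_supported P Q q :
  Dmove_closed P Q -> supported_in P q -> supported_in Q (D q).
Proof.
move=> PQ qP m Qm; rewrite Dprime_coef big1 // => j j_ge2.
rewrite mcoeffMX_cases; case: ifP => [mj_gt0|_]; last by rewrite mulr0.
rewrite mcoeff_deriv qP ?mul0rn ?mulr0 //; apply: contra Qm => Pm.
by rewrite -(addm_unit_sub mj_gt0); apply: PQ; rewrite // addmC.
Qed.

Lemma iter_Dprime_supported (P : nat -> pred 'X_{1..n.+1}) q :
  (forall i, Dmove_closed (P i) (P i.+1)) -> supported_in (P 0%N) q ->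
  forall i, supported_in (P i) (iter i D q).
Proof. by move=> PP qP; elim=> [|i IH] //=; apply: Dprime_supported IH. Qed.

Lemma expDprime_supported P (d : k) q :
  Dmove_closed P P -> supported_in P q -> supported_in P (expDprime d q).
Proof.
move=> PP qP m Pm; rewrite expDprime_coef big1 // => i _.
by rewrite (@iter_Dprime_supported (fun=> P)) ?mulr0.
Qed.

Lemma iter_Dprime_monomial_weight M i :
  supported_in (fun m => weight m + i == weight M)%N (iter i D 'X_[M]).
Proof.
apply: (@iter_Dprime_supported (fun i m => weight m + i == weight M)%N)
  => [{}i u j j_ge2|m].
  by rewrite /= weight_Dmove // addSnnS.
by rewrite mcoeffX addn0; case: (eqVneq M m) => [<-|//]; rewrite eqxx.
Qed.

(* Iterates of D' on a polynomial with natural-number coefficients keep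
   natural-number coefficients: D' has nonnegative integer structure constants. *)
Definition is_natr (x : k) := exists c : nat, x = c%:R.

Lemma is_natr_sum (I : Type) (r : seq I) (C : pred I) (F : I -> k) :
  (forall i, C i -> is_natr (F i)) -> is_natr (\sum_(i <- r | C i) F i).
Proof.
move=> FN; apply: (big_ind is_natr) => //; first by exists 0%N.
by move=> _ _ [a ->] [b ->]; exists (a + b)%N; rewrite natrD.
Qed.

Definition nat_coeffs q := forall m, is_natr q@_m.

Lemma Dprime_term_natr q (j : 'I_n.+1) m : nat_coeffs q ->
  is_natr ((j.-1)%:R * (q^`M(j) * 'X_(inord j.-1 : 'I_n.+1))@_m).
Proof.
move=> qN; rewrite mcoeffMX_cases; case: ifP => _; last by exists 0%N; rewrite mulr0.
rewrite mcoeff_deriv; have [c ->] := qN ((m - U_(inord j.-1)) + U_(j))%MM.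
by exists (j.-1 * (c * ((m - U_(inord j.-1))%MM j).+1))%N; rewrite !natrM mulr_natr.
Qed.

Lemma nat_coeffs_iter q i : nat_coeffs q -> nat_coeffs (iter i D q).
Proof.
move=> qN; elim: i => [|i IH] //= m; rewrite Dprime_coef.
by apply: is_natr_sum => j _; apply: Dprime_term_natr.
Qed.

Hypothesis chark0 : [pchar k] =i pred0.

(* In characteristic zero no cancellation can occur: a move out of a monomial
   with nonzero coefficient yields a monomial with nonzero coefficient. *)
Lemma Dprime_coef_neq0 q u (j : 'I_n.+1) : nat_coeffs q -> (2 <= j)%N ->
  q@_(U_(j) + u)%MM != 0 -> (D q)@_(U_(inord j.-1) + u)%MM != 0.
Proof.
move=> qN j_ge2 qj_neq0.
rewrite Dprime_coef (bigD1 j) //= mcoeffMX_cases mnmDE mnm1E eqxx add1n /=.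
rewrite addmC addmK mcoeff_deriv addmC.
set rest := \sum_(i | _) _.
have [c' ->] : is_natr rest by apply: is_natr_sum => i _; apply: Dprime_term_natr.
have [c qc] := qN (U_(j) + u)%MM; rewrite qc in qj_neq0 *.
rewrite -[c%:R *+ _]mulr_natr -!natrM -natrD natr_neq0 //.
have : (c != 0)%N by apply: contraNneq qj_neq0 => ->.
nia.
Qed.

Lemma Dpath_coef_neq0 q M i m : nat_coeffs q -> q@_M != 0 ->
  Dpath i M m -> (iter i D q)@_m != 0.
Proof.
move=> qN qM path; elim: path qM => [//|{}i {}M u j _ IH j_ge2] qM /=.
by apply: Dprime_coef_neq0 => //; [apply: nat_coeffs_iter | apply: IH].
Qed.

End Derivation.

(* The t-degree and x-degree bounds of R_{alpha,beta} cut out a box of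
   monomials; inside it, those not of the form t^alpha x^beta lie below a
   corner.  Both regions are unions of fibres of (t-degree, total degree),
   hence preserved by the moves of D'. *)
Definition in_box {n : nat} (a b : nat) : pred 'X_{1..n.+1} :=
  fun m => (m ord0 <= a)%N && (xdeg m <= b)%N.

Definition below_corner {n : nat} (a b : nat) : pred 'X_{1..n.+1} :=
  fun m => (m ord0 != a) || (xdeg m < b)%N.

Section LeadingTerm.
Context {k : fieldType} {n : nat}.
Hypothesis n_gt0 : (1 <= n)%N.
Context {alpha beta : nat} {p : {mpoly k[n.+1]}}.
Hypothesis pR : Rset alpha beta p.

Local Notation D := (@Dprime k n).
Local Notation Rlead := (mon_t_x alpha beta (inord n)).
Local Notation Qlead := (mon_t_x alpha beta (inord 1)).
Local Notation Box := (@in_box n alpha beta).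
Local Notation Corner := (@below_corner n alpha beta).

Lemma box_Dmove_closed : Dmove_closed (Box) (Box).
Proof. exact: (Dmove_invariant (fun c e => (c <= alpha)%N && (e - c <= beta)%N)). Qed.

Lemma corner_Dmove_closed :
  Dmove_closed (Corner) (Corner).
Proof. exact: (Dmove_invariant (fun c e => (c != alpha) || (e - c < beta)%N)). Qed.

Lemma Rset_support m : m \in msupp p -> (xdeg m <= beta)%N /\
  (m = Rlead \/ (m ord0 < alpha)%N \/ (m ord0 = alpha /\ (xdeg m < beta)%N)).
Proof.
case: pR => _ [deg_le [_ below_lead]] m_supp.
split; first by rewrite -xdegE; apply: deg_le.
case: (eqVneq m Rlead) => [->|m_neq]; [by left | right].
by apply: lex_below_Rlead => //; apply: below_lead => // m_eq; rewrite m_eq eqxx in m_neq.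
Qed.

Lemma Rset_supported_box : supported_in Box p.
Proof.
move=> m m_out; apply/eqP; rewrite mcoeff_eq0; apply: contra m_out.
move=> /Rset_support[xdeg_le shape]; rewrite /in_box xdeg_le andbT.
by case: shape => [->|[/ltnW|[->]]] //; rewrite mon_t_x_at0 ?(inord_n_neq0 n_gt0).
Qed.

Lemma Rset_tail_supported :
  supported_in (Corner) (p - p@_Rlead *: 'X_[Rlead]).
Proof.
move=> m m_out; rewrite mcoeffB mcoeffZ mcoeffX.
case: (eqVneq Rlead m) => [<-|m_neq]; first by rewrite mulr1 subrr.
rewrite mulr0 subr0; apply/eqP; rewrite mcoeff_eq0; apply: contra m_out.
case/Rset_support => _ [m_eq|[lt|[_ lt]]]; last by rewrite /below_corner lt orbT.
  by rewrite m_eq eqxx in m_neq.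
by rewrite /below_corner neq_ltn lt.
Qed.

(* Only the leading term of p contributes to the coefficient of t^alpha x_1^beta
   in D'^i p, since t^alpha x_1^beta is not below the corner. *)
Lemma iter_coef_Qlead i :
  (iter i D p)@_Qlead = p@_Rlead * (iter i D 'X_[Rlead])@_Qlead.
Proof.
set tail := p - p@_Rlead *: 'X_[Rlead].
have tail_vanishes : (iter i D tail)@_Qlead = 0.
  apply: (@iter_Dprime_supported _ _ (fun=> Corner)) => //.
  - by move=> _; apply: corner_Dmove_closed.
  - exact: Rset_tail_supported.
  have one_neq0 := inord_1_neq0 n_gt0.
  by rewrite /below_corner mon_t_x_at0 // xdeg_mon_t_x // eqxx ltnn.
rewrite -{1}(subrK (p@_Rlead *: 'X_[Rlead]) p) -/tail addrC iter_Dprime_linear.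
by rewrite mcoeffD mcoeffZ tail_vanishes addr0.
Qed.

(* Weights: t^alpha x_n^beta has weight n beta and t^alpha x_1^beta weight beta,
   so only D'^((n-1) beta) connects them. *)
Lemma iter_lead_coef_eq0 i : i != (n.-1 * beta)%N ->
  (iter i D 'X_[Rlead])@_Qlead = 0.
Proof.
move=> i_neq; apply: iter_Dprime_monomial_weight.
rewrite !mon_t_xE !weightD !weightMn !weightU /= !inordK //.
by move: i_neq; rewrite -(prednK n_gt0) /=; lia.
Qed.

Lemma iter_lead_coef_neq0 (chark0 : [pchar k] =i pred0) :
  (iter (n.-1 * beta) D 'X_[Rlead])@_Qlead != 0.
Proof.
apply: (@Dpath_coef_neq0 _ _ chark0 _ Rlead).
- by move=> m; exists (Rlead == m : nat); rewrite mcoeffX.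
- by rewrite mcoeffX eqxx oner_neq0.
have := Dpath_lower n_gt0 beta (U_(ord0) *+ alpha)%MM.
by rewrite !mon_t_xE ![(U_(ord0) *+ alpha + _)%MM]addmC.
Qed.

(* Hence in exp(d D') p the coefficient of t^alpha x_1^beta is
   (d^i / i!) p_Rlead c_i with i = (n-1) beta and c_i a positive integer. *)
Lemma expDprime_coef_Qlead (chark0 : [pchar k] =i pred0) (d : k) :
  d != 0 -> (expDprime d p)@_Qlead != 0.
Proof.
move=> d_neq0.
have i_lt : (n.-1 * beta < (n * msize p).+1)%N.
  have [_ [_ [lead_supp _]]] := pR.
  have := msize_mdeg_lt lead_supp; rewrite mdeg_mon_t_x ltnS => lt_size.
  by apply: leq_mul; [exact: leq_pred | lia].
rewrite expDprime_coef (bigD1 (Ordinal i_lt)) //= big1 ?addr0; last first.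
  by move=> i i_neq; rewrite iter_coef_Qlead iter_lead_coef_eq0 ?mulr0.
rewrite iter_coef_Qlead !mulf_neq0 ?expf_neq0 ?invr_neq0 ?iter_lead_coef_neq0 //.
- by rewrite natr_neq0 // -lt0n fact_gt0.
- by case: pR => _ [_ [lead_supp _]]; rewrite -mcoeff_msupp.
Qed.

Lemma expDprime_supported_box (d : k) :
  supported_in Box (expDprime d p).
Proof.
apply: expDprime_supported; [exact: box_Dmove_closed | exact: Rset_supported_box].
Qed.

End LeadingTerm.

Theorem lemma5p2 (k : fieldType) (chark0 : [pchar k] =i pred0) (n : nat)
  (hn : (3 <= n)%N) (alpha beta : nat) (ha : (1 <= alpha)%N) (hb : (1 <= beta)%N)
  (d : int) (hd : d != 0) (p : {mpoly k[n.+1]}) :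
  Rset alpha beta p -> Qset alpha beta (expDprime (d%:~R) p).
Proof.
move=> pR; have n_gt0 : (1 <= n)%N by lia.
have lead_neq0 := expDprime_coef_Qlead n_gt0 pR chark0 _ (intr_neq0 chark0 hd).
have in_box m : m \in msupp (expDprime d%:~R p) -> in_box alpha beta m.
  apply: contraTT => m_out.
  by rewrite -mcoeff_eq0 (expDprime_supported_box n_gt0 pR).
split; first by apply: contraNneq lead_neq0 => ->; rewrite mcoeff0.
split; first by move=> m /in_box/andP[_]; rewrite xdegE.
split; first by rewrite mcoeff_msupp.
by move=> m /in_box/andP[t_le x_le]; apply: lex_below_Qlead.
Qed.
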